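(* Let $\beta,\kappa\ge0$ and let $\gamma$ be a simple loop in $E_N$ with $\partial\hat\partial\gamma\subseteq E_N$. For each $e\in\gamma_1$ fix a plaquette $p_e\in\hat\partial e$. Then $$\mathbb E_{N,\beta,\kappa}\Bigl[\rho\Bigl(\sum_{e\in\gamma_1\setminus\gamma'}(d\sigma)_{p_e}\Bigr)\Bigr]=\mathbb E_{N,\beta,\kappa}\Bigl[\prod_{e\in\gamma_1\setminus\gamma'}\theta_{\beta,\kappa}\bigl(\sigma_e-(d\sigma)_{p_e}\bigr)\Bigr].$$
   Context: $G=\mathbb Z_n$, $\rho$ faithful unitary one-dimensional. On $\mathbb Z^4$: $E_N,P_N$ oriented edges/plaquettes with vertices in $B_N=[-N,N]^4\cap\mathbb Z^4$; $\partial p$ oriented boundary edges; $\hat\partial e=\{p:e\in\partial p\}$; $\partial\hat\partial\gamma=\bigcup_{e\in\gamma}\bigcup_{p\in\hat\partial e}\partial p$. $\Sigma_{E_N}$: $\sigma:E_N\to G$, $\sigma_{-e}=-\sigma_e$, $(d\sigma)_p=\sum_{e\in\partial p}\sigma_e$; $\mu_{N,\beta,\kappa}(\sigma)\propto\exp(\beta\sum_p\rho((d\sigma)_p)+\kappa\sum_e\rho(\sigma_e))$, expectation $\mathbb E_{N,\beta,\kappa}$. Simple loop: set $\gamma$ of oriented edges, $e\in\gamma\Rightarrow-e\notin\gamma$, orderable into an oriented loop. $\gamma_c$: edges of $\gamma$ sharing a plaquette with another edge of $\gamma\cup(-\gamma)$; $\gamma_1=\gamma\setminus\gamma_c$; $\gamma'=\gamma'(\sigma)$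 is the set of $e\in\gamma_1$ for which there are $p,p'\in\hat\partial e$ with $(d\sigma)_p\ne(d\sigma)_{p'}$. $\varphi_r(g)=e^{r(\mathrm{Re}\rho(g)-1)}$ and $\theta_{\beta,\kappa}(\hat g)=\frac{\sum_{g\in G}\rho(g)\varphi_\beta(g)^{12}\varphi_\kappa(g+\hat g)^2}{\sum_{g\in G}\varphi_\beta(g)^{12}\varphi_\kappa(g+\hat g)^2}$. *)

From HB Require Import structures.
From mathcomp Require Import all_boot all_order all_algebra.
From mathcomp Require Import boolp reals.
From mathcomp Require Import sequences exp.
From mathcomp Require Import complex.
Set Implicit Arguments. Unset Strict Implicit. Unset Printing Implicit Defensive.
Import Order.TTheory GRing.Theory Num.Theory.
Import ComplexField.
Local Open Scope ring_scope.
Local Open Scope complex_scope.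

Definition vtx := {ffun 'I_4 -> int}.
Definition shift (x : vtx) (i : 'I_4) : vtx := [ffun k => x k + (k == i)%:R].
Definition unshift (x : vtx) (i : 'I_4) : vtx := [ffun k => x k - (k == i)%:R].

(* oriented edge (x,i,b): if b, from x to x+e_i; if ~~b, from x+e_i to x *)
Definition oedge := (vtx * 'I_4 * bool)%type.
Definition eneg (e : oedge) : oedge := (e.1.1, e.1.2, ~~ e.2).
Definition estart (e : oedge) : vtx := if e.2 then e.1.1 else shift e.1.1 e.1.2.
Definition eend (e : oedge) : vtx := if e.2 then shift e.1.1 e.1.2 else e.1.1.

(* oriented plaquette (x,i,j), i != j: the square x, x+e_i, x+e_i+e_j, x+e_j
   traversed in that order; (x,j,i) is the same square with opposite orientation *)
Definition plaq := (vtx * 'I_4 * 'I_4)%type.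
Definition is_plaq (p : plaq) : bool := p.1.2 != p.2.
Definition bd (p : plaq) : seq oedge :=
  let: (x, i, j) := p in
  [:: (x, i, true); (shift x i, j, true); (shift x j, i, false); (x, j, false)].
Definition pverts (p : plaq) : seq vtx :=
  let: (x, i, j) := p in [:: x; shift x i; shift x j; shift (shift x i) j].
Definition hatbd (e : oedge) (p : plaq) : Prop := is_plaq p /\ e \in bd p.

Definition in_BN (N : nat) (x : vtx) : bool :=
  [forall k, (- (N%:Z) <= x k) && (x k <= N%:Z)].
Definition in_EN (N : nat) (e : oedge) : bool := in_BN N (estart e) && in_BN N (eend e).
Definition in_PN (N : nat) (p : plaq) : bool := is_plaq p && all (in_BN N) (pverts p).

Definition bcoord (N : nat) := {ffun 'I_4 -> 'I_(2 * N).+1}.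
Definition toV (N : nat) (c : bcoord N) : vtx := [ffun k => (c k : nat)%:Z - N%:Z].

(* positive (unoriented) edges of E_N: base point c and direction i with x+e_i in B_N *)
Definition posE (N : nat) := {a : bcoord N * 'I_4 | (a.1 a.2 < 2 * N)%N}.

(* Sigma_{E_N}: a configuration is given by its values on positively oriented
   edges of E_N; sigma_{-e} = - sigma_e then defines it on all of E_N *)
Definition config (n N : nat) := {ffun posE N -> 'Z_n}.

(* value sigma_e of the configuration at an oriented edge e (0 off E_N) *)
Definition sig_at (n N : nat) (s : config n N) (e : oedge) : 'Z_n :=
  \sum_(a : posE N | (toV (sval a).1, (sval a).2) == e.1)
     (if e.2 then s a else - s a).

Definition dsig (n N : nat) (s : config n N) (p : plaq) : 'Z_n :=
  \sum_(e <- bd p) sig_at s e.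

Section Measure.
Variables (R : realType) (n N : nat) (rho : 'Z_n -> R[i]) (beta kappa : R).

(* Re of  beta sum_{p in P_N} rho((d sigma)_p) + kappa sum_{e in E_N} rho(sigma_e)
   (this sum is real, since both orientations are summed) *)
Definition hamil (s : config n N) : R :=
  beta * \sum_(c : bcoord N) \sum_(i : 'I_4) \sum_(j : 'I_4)
      (if in_PN N (toV c, i, j) then complex.Re (rho (dsig s (toV c, i, j))) else 0)
  + kappa * \sum_(c : bcoord N) \sum_(i : 'I_4) \sum_(b : bool)
      (if in_EN N (toV c, i, b) then complex.Re (rho (sig_at s (toV c, i, b))) else 0).

Definition weight (s : config n N) : R := expR (hamil s).

Definition expect (f : config n N -> R[i]) : R[i] :=
  (\sum_(s : config n N) (weight s)%:C * f s) / (\sum_(s : config n N) weight s)%:C.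
End Measure.

Definition phi (R : realType) (n : nat) (rho : 'Z_n -> R[i]) (r : R) (g : 'Z_n) : R :=
  expR (r * (complex.Re (rho g) - 1)).

Definition theta (R : realType) (n : nat) (rho : 'Z_n -> R[i]) (beta kappa : R)
    (gh : 'Z_n) : R[i] :=
  (\sum_(g : 'Z_n) rho g * (phi rho beta g ^+ 12 * phi rho kappa (g + gh) ^+ 2)%:C)
  / (\sum_(g : 'Z_n) phi rho beta g ^+ 12 * phi rho kappa (g + gh) ^+ 2)%:C.

Definition simple_loop (gamma : seq oedge) : Prop :=
  uniq gamma /\ (forall e, e \in gamma -> eneg e \notin gamma) /\
  exists s, perm_eq s gamma /\ cycle (fun e f : oedge => eend e == estart f) s.

Definition in_gc (gamma : seq oedge) (e : oedge) : Prop :=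
  exists p e', is_plaq p /\ (e' \in gamma \/ eneg e' \in gamma) /\ e' != e /\
               e \in bd p /\ e' \in bd p.

Definition in_g1 (gamma : seq oedge) (e : oedge) : Prop := e \in gamma /\ ~ in_gc gamma e.

Definition in_gprime (n N : nat) (gamma : seq oedge) (s : config n N) (e : oedge) : Prop :=
  in_g1 gamma e /\ exists p p', hatbd e p /\ hatbd e p' /\ dsig s p != dsig s p'.

From mathcomp Require Import all_boot all_order all_algebra.
From mathcomp Require Import boolp reals.
From mathcomp Require Import sequences exp.
From mathcomp Require Import complex.
From mathcomp Require Import zify ring.
Import Order.TTheory GRing.Theory Num.Theory.
Import ComplexField.
Local Open Scope ring_scope.
Local Open Scope complex_scope.
Set Implicit Arguments. Unset Strict Implicit. Unset Printing Implicit Defensive.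

(* Let S(s) = gamma_1 \ gamma'(s).  For e in S(s) every plaquette around e carries
   the same curvature h_e = (ds)_{p_e}.  Fix an edge e0 of gamma and translate the
   configuration at e0 by g in Z_n, i.e. s |-> s + delta e0 g.  Then
   - (ds)_p moves by +g, resp. -g, on the plaquettes containing e0, resp. -e0,
     and s_{e0} moves by g (edge shifts);
   - since an edge of gamma_1 shares no plaquette with another edge of +-gamma,
     S(s), h_e and s_e for e <> e0 are unchanged (locality);
   - if e0 is in S(s), the Gibbs weight becomes K * phi_beta(h+g)^12 *
     phi_kappa(s_e0 + g)^2 with K independent of g, because e0 lies on exactly
     12 plaquettes of P_N and carries 2 oriented edges of E_N (counting).
   Averaging over g thus turns a factor rho(h_e0) into theta(s_e0 - h_e0) inside
   the unnormalised expectation.  Since rho(sum_e h_e) = prod_e rho(h_e), replacing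
   these factors one edge of gamma at a time proves the theorem. *)

Lemma shiftK (x : vtx) i : unshift (shift x i) i = x.
Proof. by apply/ffunP=> k; rewrite !ffunE addrK. Qed.

Lemma unshiftK (x : vtx) i : shift (unshift x i) i = x.
Proof. by apply/ffunP=> k; rewrite !ffunE subrK. Qed.

Lemma shift_neq (x : vtx) i : (shift x i == x) = false.
Proof.
apply/negbTE/eqP=> /ffunP /(_ i); rewrite ffunE eqxx => /eqP.
by rewrite -subr_eq0 addrC addKr oner_eq0.
Qed.

Lemma shift_eqE (x y : vtx) i : (shift y i == x) = (y == unshift x i).
Proof. by apply/eqP/eqP=> [<-|->]; [rewrite shiftK | rewrite unshiftK]. Qed.

Lemma toV_inj N : injective (@toV N).
Proof.
move=> c d /ffunP cd; apply/ffunP=> k; move: (cd k); rewrite !ffunE.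
by move/addIr => [] /val_inj.
Qed.

Lemma toV_onto N (x : vtx) : in_BN N x -> exists c : bcoord N, toV c = x.
Proof.
move/forallP=> Bx; exists [ffun k => inord (absz (x k + N%:Z))].
apply/ffunP=> k; rewrite !ffunE.
have /andP[lo hi] := Bx k.
have x_ge0 : 0 <= x k + N%:Z by lia.
rewrite inordK; last by rewrite -ltz_nat abszE ger0_norm //; lia.
by rewrite abszE ger0_norm // addrK.
Qed.

Lemma sum_eq1 (T : finType) (a : T) : (\sum_(c : T) ((c == a) : nat) = 1)%N.
Proof. by rewrite (bigD1 a) //= eqxx big1 // => c /negbTE ->. Qed.

Lemma sum_eq2 (T : finType) (a b : T) : a != b ->
  (\sum_(c : T) ((c == a) || (c == b) : nat) = 2)%N.
Proof.
move=> ab; rewrite (bigD1 a) //= eqxx (bigD1 b) /=; last by rewrite eq_sym.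
rewrite eqxx orbT big1 // => c /andP [/negbTE -> /negbTE ->].
by [].
Qed.

Lemma sum_toV1 N (x : vtx) : in_BN N x ->
  (\sum_(c : bcoord N) ((toV c == x) : nat) = 1)%N.
Proof.
move=> /(@toV_onto N) [c0 <-]; rewrite -[RHS](sum_eq1 c0).
by apply: eq_bigr => c _; rewrite (inj_eq (@toV_inj N)).
Qed.

Lemma sum_toV2 N (x y : vtx) : in_BN N x -> in_BN N y -> x != y ->
  (\sum_(c : bcoord N) (((toV c == x) || (toV c == y)) : nat) = 2)%N.
Proof.
move=> /(@toV_onto N) [c0 <-] /(@toV_onto N) [c1 <-] xy.
rewrite -[RHS](@sum_eq2 _ c0 c1); last by apply: contraNneq xy => ->.
by apply: eq_bigr => c _; rewrite !(inj_eq (@toV_inj N)).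
Qed.

Definition edge_key {N} (a : posE N) : vtx * 'I_4 := (toV (sval a).1, (sval a).2).

Lemma edge_key_inj N : injective (@edge_key N).
Proof.
move=> [[c i] ci] [[d j] dj]; rewrite /edge_key /= => -[/toV_inj cd ij].
by subst; congr exist; exact: bool_irrelevance.
Qed.

Lemma edge_key_onto N (x : vtx) i : in_BN N x -> in_BN N (shift x i) ->
  exists a : posE N, edge_key a = (x, i).
Proof.
move=> Bx /forallP /(_ i) /andP [_]; rewrite ffunE eqxx => Bxi.
have [c xc] := @toV_onto N x Bx.
have ci : (c i < 2 * N)%N.
  move/ffunP: xc => /(_ i); rewrite ffunE => xci.
  move: Bxi; rewrite -xci; move: (nat_of_ord (c i)) => m; lia.
by exists (exist _ (c, i) ci); rewrite /edge_key /= xc.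
Qed.

Lemma in_EN_ends N (e : oedge) :
  in_EN N e -> in_BN N e.1.1 /\ in_BN N (shift e.1.1 e.1.2).
Proof. by case: e => [[x i] []]; rewrite /in_EN /estart /eend /= => /andP[]. Qed.

Lemma in_EN_eneg N e : in_EN N (eneg e) = in_EN N e.
Proof. by case: e => [[x i] []]; rewrite /in_EN /eneg /estart /eend /= andbC. Qed.

Lemma enegK e : eneg (eneg e) = e.
Proof. by case: e => [[x i] b]; rewrite /eneg /= negbK. Qed.

Lemma eneg_neq e : (eneg e == e) = false.
Proof. by case: e => [[x i] []]; rewrite /eneg /= xpair_eqE /= andbF. Qed.

Definition rev_plaq (p : plaq) : plaq := (p.1.1, p.2, p.1.2).

Lemma is_plaq_rev p : is_plaq (rev_plaq p) = is_plaq p.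
Proof. by case: p => [[x i] j]; rewrite /is_plaq /rev_plaq /= eq_sym. Qed.

Lemma bd_rev p e : (e \in bd (rev_plaq p)) = (eneg e \in bd p).
Proof.
case: p => [[x i] j]; case: e => [[y k] b]; rewrite /rev_plaq /eneg /= !inE !xpair_eqE.
by case: b => /=; rewrite ?andbT ?andbF ?orbF ?orFb //= orbC.
Qed.

Lemma bd_simple p : is_plaq p ->
  uniq (bd p) /\ (forall e, e \in bd p -> eneg e \notin bd p).
Proof.
case: p => [[x i] j]; rewrite /is_plaq /= => ij.
have ji : (j == i) = false by rewrite eq_sym (negbTE ij).
split; first by rewrite /= !inE !xpair_eqE /= !eqxx (negbTE ij) ji !andbF.
move=> e; rewrite !inE => /or4P [] /eqP ->; rewrite /eneg /= !xpair_eqE /=;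
  rewrite ?eqxx ?(negbTE ij) ?ji ?andbF ?andbT ?orbF ?orFb //.
all: by rewrite ?shift_neq ?(eq_sym x) ?shift_neq.
Qed.

Lemma bd_unoriented (x y : vtx) k i j b :
  ((x, k, b) \in bd (y, i, j)) || (eneg (x, k, b) \in bd (y, i, j)) =
  ((x, k) \in [:: (y, i); (shift y i, j); (shift y j, i); (y, j)]).
Proof.
rewrite /eneg /= !inE !xpair_eqE.
by case: b; rewrite /= ?eqxx ?andbT ?andbF ?orbF ?orFb /=;
  case: (_ && _); case: (_ && _); case: (_ && _); case: (_ && _).
Qed.

Definition delta {n} N (e0 : oedge) (g : 'Z_n) : config n N :=
  [ffun a => if edge_key a == e0.1 then (if e0.2 then g else - g) else 0].

(* The value of delta N e0 g at an oriented edge e, for e0 in E_N. *)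
Definition delta_at {n} (e0 : oedge) (g : 'Z_n) (e : oedge) : 'Z_n :=
  if e == e0 then g else if e == eneg e0 then - g else 0.

Lemma sig_at_shift n N (s : config n N) e0 g e : in_EN N e0 ->
  sig_at (s + delta N e0 g) e = sig_at s e + delta_at e0 g e.
Proof.
move=> /in_EN_ends [B1 B2]; rewrite /sig_at.
rewrite (eq_bigr (fun a => (if e.2 then s a else - s a) +
            (if e.2 then delta N e0 g a else - delta N e0 g a))); last first.
  by move=> a _; rewrite ffunE; case: (e.2); rewrite ?opprD.
rewrite big_split /=; congr (_ + _).
have [ee0|ee0] := eqVneq e.1 e0.1; last first.
  rewrite big1 => [|a /eqP ae]; last first.
    by rewrite /delta ffunE /edge_key ae (negbTE ee0) oppr0 if_same.
  have ne0 : e != e0 by apply: contraNneq ee0 => ->.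
  have neN : e != eneg e0.
    by apply: contraNneq ee0 => ->; case: e0 {B1 B2 ne0} => [[? ?] ?].
  by rewrite /delta_at (negbTE ne0) (negbTE neN).
have [a0 a0e0] := edge_key_onto B1 B2.
move: a0e0 ee0; case: e => [[x i] b]; case: e0 {B1 B2} => [[x0 i0] b0] /= a0e0 ee0.
rewrite (big_pred1 a0) => [|a]; last by rewrite ee0 -a0e0 (inj_eq (@edge_key_inj N)).
rewrite /delta ffunE a0e0 eqxx /delta_at; case: ee0 => -> ->.
by case: b; case: b0; rewrite /eneg /= ?xpair_eqE ?eqxx /= ?opprK.
Qed.

Lemma sig_at_eneg n N (s : config n N) e : sig_at s (eneg e) = - sig_at s e.
Proof.
rewrite /sig_at -sumrN; case: e => [[x i] b] /=.
by apply: eq_bigr => a _; case: b; rewrite /= ?opprK.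
Qed.

Lemma dsig_rev n N (s : config n N) p : dsig s (rev_plaq p) = - dsig s p.
Proof.
case: p => [[x i] j]; rewrite /dsig /rev_plaq /= !big_cons big_nil.
rewrite -![sig_at s (_, _, false)]/(sig_at s (eneg (_, _, true))) !sig_at_eneg.
by rewrite !addr0; ring.
Qed.

Lemma dsig_shift n N (s : config n N) e0 g p : in_EN N e0 ->
  dsig (s + delta N e0 g) p = dsig s p + \sum_(e <- bd p) delta_at e0 g e.
Proof.
by move=> E0; rewrite /dsig -big_split /=; apply: eq_bigr => e _; rewrite sig_at_shift.
Qed.

Lemma sum_delta_at_out n (r : seq oedge) e0 (g : 'Z_n) :
  e0 \notin r -> eneg e0 \notin r -> \sum_(e <- r) delta_at e0 g e = 0.
Proof.
move=> r0 rN; rewrite big_seq big1 // => e er; rewrite /delta_at.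
rewrite ifF; last by apply/negbTE; apply: contraNneq r0 => <-.
by rewrite ifF //; apply/negbTE; apply: contraNneq rN => <-.
Qed.

Lemma sum_delta_at_in n (r : seq oedge) e0 (g : 'Z_n) :
  uniq r -> e0 \in r -> eneg e0 \notin r -> \sum_(e <- r) delta_at e0 g e = g.
Proof.
move=> ur r0 rN; rewrite (bigD1_seq e0) //= {1}/delta_at eqxx.
rewrite big_seq_cond big1 ?addr0 // => e /andP [er ee0]; rewrite /delta_at (negbTE ee0).
by rewrite ifF //; apply/negbTE; apply: contraNneq rN => <-.
Qed.

Lemma sum_delta_at_neg n (r : seq oedge) e0 (g : 'Z_n) :
  uniq r -> eneg e0 \in r -> e0 \notin r -> \sum_(e <- r) delta_at e0 g e = - g.
Proof.
move=> ur rN r0; rewrite (bigD1_seq (eneg e0)) //= {1}/delta_at eqxx eneg_neq.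
rewrite big_seq_cond big1 ?addr0 // => e /andP [er eN]; rewrite /delta_at (negbTE eN).
by rewrite ifF //; apply/negbTE; apply: contraNneq r0 => <-.
Qed.

Lemma dsig_shift_in n N (s : config n N) e0 g p : in_EN N e0 -> hatbd e0 p ->
  dsig (s + delta N e0 g) p = dsig s p + g.
Proof.
move=> E0 [pp e0p]; have [ubd nbd] := bd_simple pp.
by rewrite dsig_shift // sum_delta_at_in // nbd.
Qed.

Lemma dsig_shift_neg n N (s : config n N) e0 g p : in_EN N e0 -> is_plaq p ->
  eneg e0 \in bd p -> dsig (s + delta N e0 g) p = dsig s p - g.
Proof.
move=> E0 pp e0p; have [ubd nbd] := bd_simple pp.
by rewrite dsig_shift // sum_delta_at_neg //; apply: contraTN e0p => /nbd.
Qed.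

Lemma dsig_shift_out n N (s : config n N) e0 g p : in_EN N e0 ->
  e0 \notin bd p -> eneg e0 \notin bd p -> dsig (s + delta N e0 g) p = dsig s p.
Proof. by move=> E0 p0 pN; rewrite dsig_shift // sum_delta_at_out // addr0. Qed.

Section Counting.
Variables (N : nat) (gamma : seq oedge).
Hypothesis box_gamma :
  forall e p e', e \in gamma -> hatbd e p -> e' \in bd p -> in_EN N e'.

(* The condition is symmetric under reversing e: use the reversed plaquette. *)
Lemma box_gamma_unoriented e0 p : e0 \in gamma -> is_plaq p ->
  (e0 \in bd p) || (eneg e0 \in bd p) -> forall e', e' \in bd p -> in_EN N e'.
Proof.
move=> g0 pp /orP [e0p|e0p] e' e'p; first exact: (box_gamma g0 (conj pp e0p) e'p).
rewrite -in_EN_eneg; apply: (box_gamma (p := rev_plaq p) g0).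
  by split; rewrite ?is_plaq_rev // bd_rev.
by rewrite bd_rev enegK.
Qed.

Lemma in_PN_around e0 p : e0 \in gamma -> is_plaq p ->
  (e0 \in bd p) || (eneg e0 \in bd p) -> in_PN N p.
Proof.
move=> g0 pp e0p; have E := box_gamma_unoriented g0 pp e0p.
rewrite /in_PN pp /=; move: E; case: p {pp e0p} => [[x i] j] E.
have /andP [B1 B2] := E _ (mem_head _ _).
have /andP [_ B4] : in_EN N (shift x i, j, true) by apply: E; rewrite !inE eqxx orbT.
have /andP [B5 _] : in_EN N (x, j, false) by apply: E; rewrite !inE eqxx !orbT.
by rewrite /= B1 B2 B4 B5.
Qed.

Lemma in_BN_unshift x k b j : (x, k, b) \in gamma -> j != k -> in_BN N (unshift x j).
Proof.
move=> g0 jk.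
have pp : is_plaq (unshift x j, k, j) by rewrite /is_plaq /= eq_sym.
have e0p : ((x, k, b) \in bd (unshift x j, k, j)) ||
           (eneg (x, k, b) \in bd (unshift x j, k, j)).
  by rewrite bd_unoriented unshiftK !inE eqxx !orbT.
have := box_gamma_unoriented g0 pp e0p (mem_head _ _).
by rewrite /in_EN /estart /= => /andP [].
Qed.

Lemma count_plaq_dir x k b (i j : 'I_4) : (x, k, b) \in gamma -> in_BN N x -> i != j ->
  (\sum_(c : bcoord N) (((x, k, b) \in bd (toV c, i, j)) ||
                        (eneg (x, k, b) \in bd (toV c, i, j))) : nat)
  = (2 * ((k == i) + (k == j)))%N.
Proof.
move=> g0 Bx ij.
under eq_bigr do rewrite bd_unoriented !inE !xpair_eqE.
have [ki|ki] := eqVneq k i.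
  subst k; rewrite (negbTE ij) /=.
  under eq_bigr do rewrite !andbT !andbF !orbF eq_sym (eq_sym x) shift_eqE.
  rewrite sum_toV2 //; first by apply: (in_BN_unshift g0); rewrite eq_sym.
  by apply/eqP => xu; move: (shift_neq x j); rewrite {1}xu unshiftK eqxx.
have [kj|kj] := eqVneq k j.
  subst k; rewrite /=.
  under eq_bigr do rewrite ?andbT ?andbF ?orbF ?orFb
    (eq_sym x (shift _ _)) shift_eqE (eq_sym x) orbC.
  rewrite sum_toV2 //; first exact: (in_BN_unshift g0 ij).
  by apply/eqP => xu; move: (shift_neq x i); rewrite {1}xu unshiftK eqxx.
by rewrite big1 // => c _; rewrite !andbF.
Qed.

Lemma count_plaq x k b : (x, k, b) \in gamma -> in_EN N (x, k, b) ->
  (\sum_(c : bcoord N) \sum_(i : 'I_4) \sum_(j : 'I_4)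
     ((is_plaq (toV c, i, j) &&
       (((x, k, b) \in bd (toV c, i, j)) || (eneg (x, k, b) \in bd (toV c, i, j)))) : nat)
   = 12)%N.
Proof.
move=> g0 /in_EN_ends [Bx _].
rewrite exchange_big (eq_bigr (fun i => \sum_(j < 4) ((i != j) * (2 * ((k == i) + (k == j))))%N)).
  by rewrite !big_ord_recr !big_ord0 /=; case: k {g0 Bx} => [[|[|[|[|?]]]] ?].
move=> i _; rewrite exchange_big /=; apply: eq_bigr => j _; rewrite /is_plaq /=.
have [<-|ij] := eqVneq i j; first by rewrite big1.
by rewrite -(count_plaq_dir g0 Bx ij) mul1n.
Qed.
End Counting.

Lemma count_edge N (x : vtx) (k : 'I_4) : in_BN N x ->
  (\sum_(c : bcoord N) \sum_(i : 'I_4) \sum_(b : bool)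
     (((toV c == x) && (i == k)) : nat) = 2)%N.
Proof.
move=> Bx; transitivity (2 * \sum_(c : bcoord N) ((toV c == x) : nat))%N;
  last by rewrite sum_toV1.
rewrite big_distrr /=.
apply: eq_bigr => c _; rewrite (eq_bigr (fun i => 2 * ((toV c == x) && (i == k)))%N).
  by rewrite -big_distrr /=; case: (toV c == x); rewrite /= ?sum_eq1 ?big1.
by move=> i _; rewrite big_bool /= addnn -mul2n.
Qed.

Lemma sum3_shift (R : pzRingType) (I J K : finType) (F G : I -> J -> K -> R)
    (m : I -> J -> K -> nat) (D : R) :
  (forall i j k, G i j k = F i j k + (m i j k)%:R * D) ->
  \sum_i \sum_j \sum_k G i j k =
  \sum_i \sum_j \sum_k F i j k + (\sum_i \sum_j \sum_k m i j k)%:R * D.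
Proof.
move=> GE; rewrite natr_sum mulr_suml -big_split; apply: eq_bigr => i _.
rewrite natr_sum mulr_suml -big_split; apply: eq_bigr => j _.
by rewrite natr_sum mulr_suml -big_split; apply: eq_bigr => k _.
Qed.

Lemma Re_unit_inv (R : realType) (z w : R[i]) :
  `|z| = 1 -> z * w = 1 -> complex.Re w = complex.Re z.
Proof.
case: z => a b; case: w => c d; rewrite normc_def /= => z1 [E1 E2].
have ab1 : a ^+ 2 + b ^+ 2 = 1.
  by case: z1 => s1; rewrite -[LHS]sqr_sqrtr ?s1 ?expr1n // addr_ge0 // sqr_ge0.
have -> : c = a * (a * c - b * d) + b * (a * d + b * c).
  by rewrite -[LHS]mulr1 -ab1; ring.
by rewrite E1 E2; ring.
Qed.

Section Energies.
Variables (R : realType) (n N : nat) (rho : 'Z_n -> R[i]) (beta kappa : R).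
Hypothesis rho_morph : forall a b : 'Z_n, rho (a + b) = rho a * rho b.
Hypothesis rho_unit : forall g : 'Z_n, `|rho g| = 1.

Lemma rho0 : rho 0 = 1.
Proof.
have r0 : rho 0 != 0.
  by apply/eqP => r0; move: (rho_unit 0); rewrite r0 normr0 => /eqP; rewrite eq_sym oner_eq0.
by apply: (mulfI r0); rewrite -rho_morph addr0 mulr1.
Qed.

Lemma Re_rhoN x : complex.Re (rho (- x)) = complex.Re (rho x).
Proof. by apply: Re_unit_inv => //; rewrite -rho_morph subrr rho0. Qed.

Definition plaq_energy (s : config n N) : R :=
  \sum_(c : bcoord N) \sum_(i : 'I_4) \sum_(j : 'I_4)
      (if in_PN N (toV c, i, j) then complex.Re (rho (dsig s (toV c, i, j))) else 0).

Definition edge_energy (s : config n N) : R :=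
  \sum_(c : bcoord N) \sum_(i : 'I_4) \sum_(b : bool)
      (if in_EN N (toV c, i, b) then complex.Re (rho (sig_at s (toV c, i, b))) else 0).

Lemma hamilE s : hamil rho beta kappa s = beta * plaq_energy s + kappa * edge_energy s.
Proof. by []. Qed.

Variable gamma : seq oedge.
Hypothesis box_gamma :
  forall e p e', e \in gamma -> hatbd e p -> e' \in bd p -> in_EN N e'.

Lemma plaq_term_shift (s : config n N) e0 g h p : e0 \in gamma -> in_EN N e0 ->
  (forall q, hatbd e0 q -> dsig s q = h) ->
  (if in_PN N p then complex.Re (rho (dsig (s + delta N e0 g) p)) else 0) =
  (if in_PN N p then complex.Re (rho (dsig s p)) else 0) +
  ((is_plaq p && ((e0 \in bd p) || (eneg e0 \in bd p))) : nat)%:R *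
    (complex.Re (rho (h + g)) - complex.Re (rho h)).
Proof.
move=> g0 E0 flat.
case pp: (is_plaq p); last by rewrite /in_PN pp /= mul0r addr0.
case e0p: ((e0 \in bd p) || (eneg e0 \in bd p)); last first.
  by move/negbT: e0p; rewrite negb_or => /andP [? ?]; rewrite dsig_shift_out // mul0r addr0.
rewrite (in_PN_around box_gamma g0 pp e0p) mul1r.
case e0p': (e0 \in bd p).
  by rewrite dsig_shift_in // flat // [RHS]addrC subrK.
move: e0p; rewrite e0p' orFb => Ne0p.
have hr : dsig s p = - h.
  by rewrite -(flat (rev_plaq p)) ?dsig_rev ?opprK //; split; rewrite ?is_plaq_rev ?bd_rev.
by rewrite dsig_shift_neg // hr -opprD !Re_rhoN [RHS]addrC subrK.
Qed.

Lemma plaq_energy_shift (s : config n N) e0 g h : e0 \in gamma -> in_EN N e0 ->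
  (forall p, hatbd e0 p -> dsig s p = h) ->
  plaq_energy (s + delta N e0 g) =
  plaq_energy s + 12%:R * (complex.Re (rho (h + g)) - complex.Re (rho h)).
Proof.
move=> g0 E0 flat; rewrite /plaq_energy.
rewrite (sum3_shift (fun c i j => @plaq_term_shift s e0 g h (toV c, i, j) g0 E0 flat)).
by move: g0 E0 {flat}; case: e0 => [[x k] b] g0 E0; rewrite (count_plaq box_gamma g0 E0).
Qed.

Lemma edge_term_shift (s : config n N) x k b0 g y i b : in_EN N (x, k, b0) ->
  (if in_EN N (y, i, b) then complex.Re (rho (sig_at (s + delta N (x, k, b0) g) (y, i, b)))
   else 0) =
  (if in_EN N (y, i, b) then complex.Re (rho (sig_at s (y, i, b))) else 0) +
  (((y == x) && (i == k)) : nat)%:R *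
    (complex.Re (rho (sig_at s (x, k, b0) + g)) - complex.Re (rho (sig_at s (x, k, b0)))).
Proof.
move=> E0; rewrite sig_at_shift // /delta_at /eneg /= !xpair_eqE.
have [-> /=|yx] := eqVneq y x; last by rewrite /= mul0r !addr0.
have [-> /=|ik] := eqVneq i k; last by rewrite /= mul0r !addr0.
rewrite mul1r; have [-> /=|bb0] := eqVneq b b0; first by rewrite E0 [RHS]addrC subrK.
have -> : b = ~~ b0 by move: bb0; case: b; case: (b0).
rewrite eqxx -[(x, k, ~~ b0)]/(eneg (x, k, b0)) in_EN_eneg E0 sig_at_eneg.
by rewrite -opprD !Re_rhoN [RHS]addrC subrK.
Qed.

Lemma edge_energy_shift (s : config n N) e0 g : in_EN N e0 ->
  edge_energy (s + delta N e0 g) = edge_energy s +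
    2%:R * (complex.Re (rho (sig_at s e0 + g)) - complex.Re (rho (sig_at s e0))).
Proof.
case: e0 => [[x k] b0] E0.
rewrite /edge_energy (sum3_shift (fun c i b => @edge_term_shift s x k b0 g (toV c) i b E0)).
by rewrite count_edge //; case: (in_EN_ends E0).
Qed.
End Energies.

Lemma sum_translates (T : finType) (I : finType) (V : nmodType)
    (tr : I -> T -> T) (f : T -> V) :
  (forall i, injective (tr i)) ->
  \sum_(t : T) \sum_(i : I) f (tr i t) = (\sum_(t : T) f t) *+ #|I|.
Proof.
move=> tr_inj; rewrite exchange_big /= -sumr_const.
by apply: eq_bigr => i _; rewrite [RHS](reindex_inj (tr_inj i)).
Qed.

Lemma tilted_average (R : realType) (V : finZmodType) (psi : V -> R)
    (f : V -> R[i]) (K : R) (h : V) :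
  (forall u, 0 < psi u) ->
  \sum_(g : V) (K * psi (h + g))%:C * f (h + g) =
  (\sum_(u : V) f u * (psi u)%:C) / (\sum_(u : V) psi u)%:C *
    \sum_(g : V) (K * psi (h + g))%:C.
Proof.
move=> psi_gt0.
have sum_gt0 : 0 < \sum_(u : V) psi u.
  by rewrite (bigD1 0) //= ltr_pwDl // sumr_ge0 // => u _; apply/ltW.
have shift (F : V -> R[i]) : \sum_(g : V) F (h + g) = \sum_(u : V) F u.
  by rewrite [RHS](reindex_inj (addrI h)).
rewrite (shift (fun u => (K * psi u)%:C * f u)) (shift (fun u => (K * psi u)%:C)).
have -> : \sum_(u : V) (K * psi u)%:C * f u = K%:C * \sum_(u : V) f u * (psi u)%:C.
  by rewrite mulr_sumr; apply: eq_bigr => u _; rewrite rmorphM -mulrA [_ * f u]mulrC.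
have -> : \sum_(u : V) (K * psi u)%:C = K%:C * (\sum_(u : V) psi u)%:C.
  by rewrite rmorph_sum mulr_sumr; apply: eq_bigr => u _; rewrite rmorphM.
by rewrite mulrCA divfK // (fmorph_eq0 (real_complex R)) lt0r_neq0.
Qed.

Section Main.
Variables (R : realType) (n N : nat) (rho : 'Z_n -> R[i]) (beta kappa : R)
  (gamma : seq oedge) (pe : oedge -> plaq).
Hypothesis n_gt1 : (1 < n)%N.
Hypothesis rho_morph : forall a b : 'Z_n, rho (a + b) = rho a * rho b.
Hypothesis rho_unit : forall g : 'Z_n, `|rho g| = 1.
Hypothesis gamma_loop : simple_loop gamma.
Hypothesis gamma_EN : forall e, e \in gamma -> in_EN N e.
Hypothesis box_gamma :
  forall e p e', e \in gamma -> hatbd e p -> e' \in bd p -> in_EN N e'.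
Hypothesis pe_around : forall e, in_g1 gamma e -> hatbd e (pe e).

Let gamma_uniq : uniq gamma. Proof. by case: gamma_loop. Qed.

Let gamma_eneg e : e \in gamma -> eneg e \notin gamma.
Proof. by case: gamma_loop => _ [+ _]; apply. Qed.

Lemma g1_isolated e0 e p : e0 \in gamma -> in_g1 gamma e -> e != e0 -> hatbd e p ->
  e0 \notin bd p /\ eneg e0 \notin bd p.
Proof.
move=> g0 [ge not_gc] ee0 [pp ep]; split; apply/negP => e0p; apply: not_gc.
  by exists p, e0; do !split => //; [left | rewrite eq_sym].
exists p, (eneg e0); do !split => //; first by right; rewrite enegK.
by apply: contraTneq ge => <-; apply: gamma_eneg.
Qed.

Lemma dsig_local (s : config n N) e0 g e p : e0 \in gamma -> in_g1 gamma e -> hatbd e p ->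
  dsig (s + delta N e0 g) p = dsig s p + (if e == e0 then g else 0).
Proof.
move=> g0 g1e ep; have [<-|ee0] := eqVneq e e0.
  by rewrite dsig_shift_in // gamma_EN //; case: g1e.
by have [? ?] := g1_isolated g0 g1e ee0 ep; rewrite dsig_shift_out ?gamma_EN ?addr0.
Qed.

Lemma sig_at_local (s : config n N) e0 g e : e0 \in gamma -> e \in gamma ->
  sig_at (s + delta N e0 g) e = sig_at s e + (if e == e0 then g else 0).
Proof.
move=> g0 ge; rewrite sig_at_shift ?gamma_EN // /delta_at; case: (e == e0) => //.
by rewrite ifF //; apply/negbTE; apply: contraTneq ge => ->; apply: gamma_eneg.
Qed.

Definition inS (s : config n N) e : bool := `[< in_g1 gamma e /\ ~ in_gprime gamma s e >].

Lemma inS_shift (s : config n N) e0 g e : e0 \in gamma ->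
  inS (s + delta N e0 g) e = inS s e.
Proof.
move=> g0; apply: asbool_equiv_eq.
suff gp_eq : in_g1 gamma e -> (in_gprime gamma (s + delta N e0 g) e <-> in_gprime gamma s e).
  by split => -[g1e ngp]; split => // gp; apply: ngp; apply/(gp_eq g1e).
move=> g1e; have dsig_e p : hatbd e p ->
    dsig (s + delta N e0 g) p = dsig s p + (if e == e0 then g else 0).
  exact: dsig_local.
rewrite /in_gprime; split => -[_ [p [p' [ep [ep' dpp']]]]]; split => //;
  exists p, p'; do 2 (split => //); move: dpp'; by rewrite !dsig_e // (inj_eq (addIr _)).
Qed.

Lemma inS_flat (s : config n N) e0 p : inS s e0 -> hatbd e0 p -> dsig s p = dsig s (pe e0).
Proof.
move=> /asboolP [g1e0 ngp] e0p; apply/eqP; apply/negPn/negP => dne; apply: ngp.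
by split => //; exists p, (pe e0); split => //; split => //; exact: pe_around.
Qed.

(* The density in g of the Gibbs weight along the translates of s at e0. *)
Definition tilt (gh : 'Z_n) (u : 'Z_n) : R :=
  phi rho beta u ^+ 12 * phi rho kappa (u + gh) ^+ 2.

Lemma weight_shift (s : config n N) e0 g : e0 \in gamma -> inS s e0 ->
  let h := dsig s (pe e0) in let sg := sig_at s e0 in
  weight rho beta kappa (s + delta N e0 g) =
  expR (hamil rho beta kappa s - 12%:R * (beta * (complex.Re (rho h) - 1))
        - 2%:R * (kappa * (complex.Re (rho sg) - 1))) * tilt (sg - h) (h + g).
Proof.
move=> g0 S0 h sg; have E0 := gamma_EN g0.
have flat p : hatbd e0 p -> dsig s p = h by exact: inS_flat.
rewrite /weight hamilE (plaq_energy_shift rho_morph rho_unit box_gamma g g0 E0 flat).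
rewrite (edge_energy_shift rho_morph rho_unit s g E0) -/sg /tilt /phi.
rewrite -!expRM_natl -!expRD hamilE.
have -> : h + g + (sg - h) = sg + g by rewrite addrC addrA subrK.
by congr expR; ring.
Qed.

Lemma average_rho (s : config n N) e0 : e0 \in gamma -> inS s e0 ->
  let h := dsig s (pe e0) in let sg := sig_at s e0 in
  \sum_(g : 'Z_n) (weight rho beta kappa (s + delta N e0 g))%:C * rho (h + g) =
  theta rho beta kappa (sg - h) *
    \sum_(g : 'Z_n) (weight rho beta kappa (s + delta N e0 g))%:C.
Proof.
move=> g0 S0 h sg.
under eq_bigr do rewrite (weight_shift _ g0 S0).
under [in RHS]eq_bigr do rewrite (weight_shift _ g0 S0).
rewrite tilted_average // => u.
by rewrite /tilt mulr_gt0 // exprn_gt0 // /phi expR_gt0.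
Qed.

Definition factor (Q : pred oedge) (s : config n N) e : R[i] :=
  if Q e then theta rho beta kappa (sig_at s e - dsig s (pe e)) else rho (dsig s (pe e)).

Definition obs (Q : pred oedge) (s : config n N) : R[i] :=
  \prod_(e <- gamma | inS s e) factor Q s e.

Lemma obs_shift Q (s : config n N) e0 g : e0 \in gamma ->
  obs Q (s + delta N e0 g) =
  (if inS s e0 then factor Q (s + delta N e0 g) e0 else 1) *
  \prod_(e <- gamma | (e != e0) && inS s e) factor Q s e.
Proof.
move=> g0; rewrite /obs; under eq_bigl do rewrite inS_shift //.
rewrite big_mkcond (bigD1_seq e0) //= -big_mkcondr; congr (_ * _).
rewrite big_seq_cond [RHS]big_seq_cond; apply: eq_bigr => e /and3P [ge ee0 Se].
have g1e : in_g1 gamma e by case/asboolP: Se.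
by rewrite /factor (dsig_local s g g0 g1e (pe_around g1e)) sig_at_local // (negbTE ee0) !addr0.
Qed.

Definition gibbs_sum (f : config n N -> R[i]) : R[i] :=
  \sum_(s : config n N) (weight rho beta kappa s)%:C * f s.

Lemma gibbs_sum_step Q e0 : e0 \in gamma -> ~~ Q e0 ->
  gibbs_sum (obs Q) = gibbs_sum (obs (predU1 e0 Q)).
Proof.
move=> g0 Qe0.
have tr_inj (g : 'Z_n) : injective (fun s : config n N => s + delta N e0 g) by apply: addIr.
apply: (@pmulrnI _ #|'Z_n|); first by rewrite card_ord Zp_cast // ltnW.
rewrite /gibbs_sum -!(sum_translates _ tr_inj); apply: eq_bigr => s _.
under eq_bigr do rewrite obs_shift //.
under [in RHS]eq_bigr do rewrite obs_shift //.
have -> : \prod_(e <- gamma | (e != e0) && inS s e) factor (predU1 e0 Q) s e =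
          \prod_(e <- gamma | (e != e0) && inS s e) factor Q s e.
  by apply: eq_bigr => e /andP [ee0 _]; rewrite /factor /= (negbTE ee0).
case S0: (inS s e0) => //.
have g1e0 : in_g1 gamma e0 by case/asboolP: S0.
under eq_bigr do rewrite mulrA.
under [in RHS]eq_bigr do rewrite mulrA.
rewrite -!mulr_suml; congr (_ * _); rewrite /factor /= eqxx (negbTE Qe0).
have dsig_e0 g : dsig (s + delta N e0 g) (pe e0) = dsig s (pe e0) + g.
  by rewrite (dsig_local s g g0 g1e0 (pe_around g1e0)) eqxx.
under eq_bigr do rewrite dsig_e0.
under [in RHS]eq_bigr do rewrite dsig_e0 sig_at_local // eqxx opprD addrACA subrr addr0.
by rewrite (average_rho g0 S0) mulr_sumr; apply: eq_bigr => g _; rewrite mulrC.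
Qed.

Lemma obs_ext Q Q' s : Q =1 Q' -> obs Q s = obs Q' s.
Proof. by move=> QQ'; apply: eq_bigr => e _; rewrite /factor QQ'. Qed.

Lemma gibbs_sum_prefix m :
  gibbs_sum (obs pred0) = gibbs_sum (obs [pred e | e \in take m gamma]).
Proof.
elim: m => [|m IH].
  by apply: eq_bigr => s _; rewrite (@obs_ext _ pred0) // => e; rewrite take0.
have [m_lt|m_ge] := ltnP m (size gamma); last first.
  by rewrite take_oversize ?(leqW m_ge) // IH take_oversize.
have := mem_nth ([ffun => 0], ord0, true) m_lt.
have := take_uniq (m.+1) gamma_uniq; rewrite IH (take_nth ([ffun => 0], ord0, true) m_lt).
set e0 := nth _ gamma m; rewrite rcons_uniq => /andP [e0_new _] g0.
rewrite (gibbs_sum_step g0) //; apply: eq_bigr => s _; congr (_ * _).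
by apply: obs_ext => e; rewrite /= mem_rcons inE.
Qed.

Lemma gibbs_sum_ward :
  gibbs_sum (fun s => rho (\sum_(e <- gamma | inS s e) dsig s (pe e))) =
  gibbs_sum (fun s => \prod_(e <- gamma | inS s e)
                        theta rho beta kappa (sig_at s e - dsig s (pe e))).
Proof.
have := gibbs_sum_prefix (size gamma); rewrite take_size => all_edges.
transitivity (gibbs_sum (obs pred0)).
  apply: eq_bigr => s _; congr (_ * _).
  by rewrite (big_morph rho rho_morph (rho0 rho_morph rho_unit)).
rewrite all_edges; apply: eq_bigr => s _; congr (_ * _).
rewrite /obs big_seq_cond [RHS]big_seq_cond.
by apply: eq_bigr => e /andP [ge _]; rewrite /factor /= ge.
Qed.
End Main.

Theorem mainTheorem18 (R : realType) (n N : nat) (rho : 'Z_n -> R[i])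
    (beta kappa : R) (gamma : seq oedge) (pe : oedge -> plaq) :
  (1 < n)%N ->
  (* rho : a faithful unitary one-dimensional representation of Z_n *)
  (forall a b : 'Z_n, rho (a + b) = rho a * rho b) ->
  (forall g : 'Z_n, `|rho g| = 1) ->
  injective rho ->
  0 <= beta -> 0 <= kappa ->
  (* gamma is a simple loop in E_N *)
  simple_loop gamma ->
  (forall e, e \in gamma -> in_EN N e) ->
  (* \partial \hat\partial gamma \subseteq E_N *)
  (forall e p e', e \in gamma -> hatbd e p -> e' \in bd p -> in_EN N e') ->
  (* p_e \in \hat\partial e for e \in gamma_1 *)
  (forall e, in_g1 gamma e -> hatbd e (pe e)) ->
  @expect R n N rho beta kappa
    (fun s => rho (\sum_(e <- gamma | `[< in_g1 gamma e /\ ~ in_gprime gamma s e >])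
                     dsig s (pe e)))
  = @expect R n N rho beta kappa
    (fun s => \prod_(e <- gamma | `[< in_g1 gamma e /\ ~ in_gprime gamma s e >])
                 theta rho beta kappa (sig_at s e - dsig s (pe e))).
Proof.
move=> n_gt1 rho_morph rho_unit _ _ _ loop gamma_EN box_gamma pe_around.
rewrite /expect; congr (_ / _).
exact: (gibbs_sum_ward beta kappa n_gt1 rho_morph rho_unit loop gamma_EN box_gamma pe_around).
Qed.
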